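(* Let $1<p<\infty$, $k\in\mathbb N$, and $\delta,c_1,\dots,c_k>0$. Suppose $l\in\mathbb N$ satisfies $l\left(\frac{\min(c_1,\dots,c_k)}{\max(c_1,\dots,c_k)}\right)^p\ge1$. Let $(\Omega,\Sigma,\mu)$ be any measure space and let $f_1,\dots,f_l$ be pairwise disjoint functions in $L^{p,\infty}(\Omega,\Sigma,\mu)$ such that $|f_j|\ge\sum_{m=1}^k c_m\chi_{\sigma(m,j)}$ for each $j$, where for each $j$ the sets $\sigma(1,j),\dots,\sigma(k,j)\in\Sigma$ are pairwise disjoint with $\mu(\sigma(m,j))>(\delta/c_m)^p$ for $1\le m\le k$. Then $$\Big\|\sum_{j=1}^l j^{-1/p}f_j\Big\|\ge\Big(\frac k2\Big)^{1/p}\delta.$$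
   Context: $L^{p,\infty}(\Omega,\Sigma,\mu)$ is the space of (equivalence classes of) measurable $f$ with $\|f\|=\sup_{c>0}c\,(\mu\{|f|>c\})^{1/p}<\infty$; here $\|\cdot\|$ denotes exactly this quasi-norm. Functions $f,g$ are disjoint if $|f|\wedge|g|=0$. *)

From HB Require Import structures.
From mathcomp Require Import all_boot all_order all_algebra.
From mathcomp Require Import all_classical all_reals all_analysis.
Set Implicit Arguments. Unset Strict Implicit. Unset Printing Implicit Defensive.
Import Order.TTheory GRing.Theory Num.Theory.
Local Open Scope classical_set_scope.
Local Open Scope ring_scope.

Definition weak_norm d (T : measurableType d) (R : realType)
  (mu : {measure set T -> \bar R}) (p : R) (f : T -> R) : \bar R :=
  ereal_sup [set (c%:E * poweR (mu [set x | (c < `|f x|)%R]) p^-1)%E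
            | c in [set c : R | (0 < c)%R]].

Definition in_weakLp d (T : measurableType d) (R : realType)
  (mu : {measure set T -> \bar R}) (p : R) (f : T -> R) : Prop :=
  measurable_fun setT f /\ (weak_norm mu p f < +oo)%E.

Definition disjoint_fun d (T : measurableType d) (R : realType)
  (mu : {measure set T -> \bar R}) (f g : T -> R) : Prop :=
  {ae mu, forall x, Num.min `|f x| `|g x| = 0}.

From HB Require Import structures.
From mathcomp Require Import all_boot all_order all_algebra.
From mathcomp Require Import all_classical all_reals all_analysis.
From mathcomp Require Import measurable_realfun.
From mathcomp Require Import ring lra.
Import Order.TTheory GRing.Theory Num.Theory.
Local Open Scope classical_set_scope.
Local Open Scope ring_scope.

(* Choose the level t with (max c / t)^p = 2l, so that x_m := (c_m / t)^p lies in
   [2, 2l].  Off a null set, on sigma(m,j) only f_j is nonzero (the f_i are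
   disjoint), so |F| >= j^(-1/p) c_m there, which exceeds t as soon as j < x_m.
   The sets sigma(m,j) with j <= ceil(x_m / 2) (< x_m and <= l) are therefore
   pairwise disjoint subsets of {|F| > t}, whence
   mu{|F| > t} >= sum_m (x_m / 2) (delta / c_m)^p = (k/2) (delta / t)^p
   and t mu{|F| > t}^(1/p) >= (k/2)^(1/p) delta. *)

Section real_lemmas.
Local Set Implicit Arguments.
Local Unset Strict Implicit.
Context {R : realType}.

Lemma powRK (p x : R) : 0 < p -> 0 <= x -> (x `^ p) `^ p^-1 = x.
Proof. by move=> p0 x0; rewrite -powRrM mulfV ?gt_eqF // powRr1. Qed.

Lemma lt_powRN_mul (p t c x : R) : 0 < p -> 0 < t -> 0 < c ->
  0 < x -> x < (c / t) `^ p -> t < x `^ (- p^-1) * c.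
Proof.
move=> p0 t0 c0 x0 xct.
have : x `^ p^-1 < c / t.
  rewrite -[c / t](@powRK p) ?divr_ge0 ?(ltW c0) ?(ltW t0) //.
  by apply: gt0_ltr_powR; rewrite ?invr_gt0 ?nnegrE ?powR_ge0 ?(ltW x0).
rewrite ltr_pdivlMr // => h.
by rewrite powRN mulrC ltr_pdivlMr ?powR_gt0 // mulrC.
Qed.

Lemma ceil_half_bounds (l : nat) (x : R) : 2 <= x <= 2 * l%:R ->
  [/\ (`|Num.ceil (x / 2)|%N <= l)%N, x / 2 <= `|Num.ceil (x / 2)|%N%:R
    & `|Num.ceil (x / 2)|%N%:R < x].
Proof.
move=> /andP[x2 x2l].
have := ceil_le_int (x / 2) l; have := ceilB1_lt (x / 2); have := ceil_ge (x / 2).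
have : 0 <= Num.ceil (x / 2) by rewrite ceil_ge0; lra.
case: (Num.ceil (x / 2)) => // n _ /= ge; rewrite intrB => lt nl.
by split => //; [rewrite -lez_nat nl; lra | lra].
Qed.

Lemma powR_ratio_bounds (p a b c t : R) (l : nat) :
  0 < p -> 0 < a -> 0 < t -> a <= c <= b ->
  1 <= l%:R * (a / b) `^ p -> (b / t) `^ p = 2 * l%:R ->
  2 <= (c / t) `^ p <= 2 * l%:R.
Proof.
move=> p0 a0 t0 /andP[ac cb] hl bt.
have c0 : 0 < c by apply: lt_le_trans ac.
have b0 : 0 < b by apply: lt_le_trans cb.
have mono u v : 0 < u -> u <= v -> (u / t) `^ p <= (v / t) `^ p.
  move=> u0 uv; apply: ge0_ler_powR; rewrite ?nnegrE ?divr_ge0 ?(ltW p0) ?(ltW t0) //.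
  - exact: ltW.
  - exact: ltW (lt_le_trans u0 uv).
  - by rewrite ler_pM2r ?invr_gt0.
apply/andP; split; last by rewrite -bt mono.
apply: le_trans (mono _ _ a0 ac).
have -> : a / t = (a / b) * (b / t) by field; rewrite ?gt_eqF.
rewrite powRM ?divr_ge0 ?(ltW a0) ?(ltW b0) ?(ltW t0) // bt; nra.
Qed.

Lemma exists_level_ratio_bounds (p : R) (k l : nat) (c : nat -> R) :
  0 < p -> (0 < k)%N -> (forall m, (1 <= m <= k)%N -> 0 < c m) ->
  1 <= l%:R * ((\big[Num.min/c 1%N]_(1 <= m < k.+1) c m)
               / (\big[Num.max/c 1%N]_(1 <= m < k.+1) c m)) `^ p ->
  exists2 t, 0 < t & forall m, (1 <= m <= k)%N -> 2 <= (c m / t) `^ p <= 2 * l%:R.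
Proof.
move=> p0 k0 c_gt0 hl.
set a := \big[Num.min/c 1%N]_(1 <= m < k.+1) c m in hl.
set b := \big[Num.max/c 1%N]_(1 <= m < k.+1) c m in hl.
have a_le_c m : (1 <= m <= k)%N -> a <= c m.
  by move=> hm; apply: ge_bigmin_seq; rewrite // mem_index_iota ltnS.
have c_le_b m : (1 <= m <= k)%N -> c m <= b.
  by move=> hm; apply: le_bigmax_seq; rewrite // mem_index_iota ltnS.
have a_gt0 : 0 < a.
  rewrite /a big_seq_cond; apply: (big_ind (fun x => 0 < x)) => [|x y x0 y0|m].
  - by apply: c_gt0; rewrite leqnn k0.
  - by rewrite lt_min x0 y0.
  - by rewrite mem_index_iota ltnS andbT; exact: c_gt0.
have k1 : (1 <= 1 <= k)%N by rewrite leqnn k0.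
have b_gt0 : 0 < b by apply: lt_le_trans a_gt0 (le_trans (a_le_c _ k1) (c_le_b _ k1)).
have l_gt0 : (0 < l)%N by move: hl; case: (l) => //=; rewrite mul0r ler10.
exists (b / (2 * l%:R) `^ p^-1) => [|m hm].
  by rewrite divr_gt0 ?powR_gt0 ?mulr_gt0 ?ltr0n.
apply: powR_ratio_bounds hl _ => //; first by rewrite divr_gt0 ?powR_gt0 ?mulr_gt0 ?ltr0n.
  by rewrite a_le_c ?c_le_b.
by rewrite divKf ?gt_eqF ?powR_gt0 ?mulr_gt0 ?ltr0n // powRAC powRK ?mulr_ge0 ?ler0n.
Qed.

End real_lemmas.

Lemma big_seq_only1 (V : nmodType) (I : eqType) (s : seq I) (j : I) (F : I -> V) :
  uniq s -> j \in s -> (forall i, i \in s -> i != j -> F i = 0) ->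
  \sum_(i <- s) F i = F j.
Proof.
move=> us js F0; rewrite (bigD1_seq j) //= big1_seq ?addr0 // => i /andP[ij si].
exact: F0.
Qed.

Lemma ler_sum_indic (R : numDomainType) (T : Type) (I : eqType) (s : seq I)
    (c : I -> R) (S : I -> set T) (i : I) (y : T) :
  uniq s -> i \in s -> (forall m, m \in s -> 0 <= c m) -> S i y ->
  c i <= \sum_(m <- s) c m * \1_(S m) y.
Proof.
move=> us si c0 Siy; rewrite (bigD1_seq i) //= indicE mem_set // mulr1 lerDl.
by rewrite big_seq_cond sumr_ge0 // => m /andP[ms _]; rewrite mulr_ge0 ?c0.
Qed.

Section measure_lemmas.
Local Set Implicit Arguments.
Local Unset Strict Implicit.
Context {d : measure_display} {T : measurableType d} {R : realType}
  (mu : {measure set T -> \bar R}).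

Lemma le_measure_sum_trivIset (I : choiceType) (s : seq I) (F : I -> set T)
    (A : set T) :
  uniq s -> measurable A -> (forall i, i \in s -> measurable (F i)) ->
  trivIset [set` s] F -> (forall i, i \in s -> F i `<=` A) ->
  (\sum_(i <- s) mu (F i) <= mu A)%E.
Proof.
move=> us mA mF tF FA.
rewrite fsbig_seq // -measure_fin_bigcup //.
apply: le_measure; rewrite ?inE //; last by move=> x [i /FA]; apply.
by apply: fin_bigcup_measurable; [exact: finite_seq|exact: mF].
Qed.

Lemma weak_norm_ge_level (p t r : R) (F : T -> R) : 0 < p -> 0 < t -> 0 <= r ->
  (r%:E <= mu [set x | (t < `|F x|)%R])%E ->
  ((t * r `^ p^-1)%:E <= weak_norm mu p F)%E.
Proof.
move=> p0 t0 r0 rA.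
apply: (@le_trans _ _ (t%:E * poweR (mu [set x | (t < `|F x|)%R]) p^-1)%E).
  rewrite EFinM -poweR_EFin lee_wpmul2l ?lee_fin ?(ltW t0) //.
  by apply: gt0_ler_poweR; rewrite ?invr_ge0 ?(ltW p0) ?in_itv /= ?lee_fin ?leey ?andbT.
by rewrite /weak_norm; apply: ereal_sup_ubound; exists t.
Qed.

Lemma ae_impl (P : Prop) (Q : T -> Prop) :
  (P -> {ae mu, forall x, Q x}) -> {ae mu, forall x, P -> Q x}.
Proof.
move=> PQ; have [/PQ|nP] := pselect P; first by apply: filterS => x Qx _.
by apply: nearW => x /nP.
Qed.

Lemma ae_forall_in (P : nat -> Prop) (Q : nat -> T -> Prop) :
  (forall n, P n -> {ae mu, forall x, Q n x}) ->
  {ae mu, forall x, forall n, P n -> Q n x}.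
Proof. by move=> PQ; apply: ae_foralln => n; apply: ae_impl; exact: PQ. Qed.

Lemma ae_null_set (P : T -> Prop) : {ae mu, forall x, P x} ->
  exists N, [/\ measurable N, mu N = 0 & forall x, ~ N x -> P x].
Proof.
move=> [N [mN N0 PN]]; exists N; split => // x Nx.
by apply: contra_notP Nx; exact: PN.
Qed.

End measure_lemmas.

Section disjoint_blocks.
Local Set Implicit Arguments.
Local Unset Strict Implicit.
Context {R : realType} {d : measure_display} {T : measurableType d}
  {mu : {measure set T -> \bar R}} {p delta : R} {k l : nat} {c : nat -> R}
  {f : nat -> T -> R} {sigma : nat -> nat -> set T} {N : set T}.
Hypotheses (p_gt0 : 0 < p) (delta_gt0 : 0 < delta).
Hypothesis c_gt0 : forall {m}, (1 <= m <= k)%N -> 0 < c m.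
Hypothesis f_meas : forall {j}, (1 <= j <= l)%N -> measurable_fun setT (f j).
Hypothesis sigma_meas : forall {j m}, (1 <= j <= l)%N -> (1 <= m <= k)%N ->
  measurable (sigma m j).
Hypothesis sigma_disj : forall {j m m'}, (1 <= j <= l)%N -> (1 <= m <= k)%N ->
  (1 <= m' <= k)%N -> m <> m' -> sigma m j `&` sigma m' j = set0.
Hypothesis sigma_large : forall {j m}, (1 <= j <= l)%N -> (1 <= m <= k)%N ->
  (((delta / c m) `^ p)%:E < mu (sigma m j))%E.
Hypotheses (N_meas : measurable N) (N0 : mu N = 0).
Hypothesis f_ge : forall {j y}, (1 <= j <= l)%N -> ~ N y ->
  \sum_(1 <= m < k.+1) c m * \1_(sigma m j) y <= `|f j y|.
Hypothesis f_disj : forall {i j y}, (1 <= i <= l)%N -> (1 <= j <= l)%N -> i <> j ->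
  ~ N y -> Num.min `|f i y| `|f j y| = 0.

Let F y := \sum_(1 <= j < l.+1) j%:R `^ (- p^-1) * f j y.

Lemma c_le_norm_f m j y : (1 <= m <= k)%N -> (1 <= j <= l)%N -> ~ N y ->
  sigma m j y -> c m <= `|f j y|.
Proof.
move=> hm hj Ny s; apply: le_trans (f_ge hj Ny); apply: ler_sum_indic => //.
- by rewrite /index_iota iota_uniq.
- by rewrite mem_index_iota ltnS.
- by move=> m'; rewrite mem_index_iota ltnS => /c_gt0/ltW.
Qed.

Lemma f_eq0_off_block m i j y : (1 <= m <= k)%N -> (1 <= i <= l)%N ->
  (1 <= j <= l)%N -> i != j -> ~ N y -> sigma m j y -> f i y = 0.
Proof.
move=> hm hi hj /eqP ij Ny s; have cf := c_le_norm_f hm hj Ny s.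
have := f_disj hi hj ij Ny; rewrite /Num.min; case: ifPn => [_ /normr0_eq0 //|_ fj0].
by move: cf; rewrite fj0 leNgt c_gt0.
Qed.

Lemma F_on_block m j y : (1 <= m <= k)%N -> (1 <= j <= l)%N -> ~ N y ->
  sigma m j y -> F y = j%:R `^ (- p^-1) * f j y.
Proof.
move=> hm hj Ny s; apply: big_seq_only1.
- by rewrite /index_iota iota_uniq.
- by rewrite mem_index_iota ltnS.
- move=> i; rewrite mem_index_iota ltnS => hi ij.
  by rewrite (f_eq0_off_block hm hi hj ij Ny s) mulr0.
Qed.

Lemma measurable_level_set t : measurable [set y | t < `|F y|].
Proof.
pose g i y := if (1 <= i <= l)%N then i%:R `^ (- p^-1) * f i y else 0.
have mF : measurable_fun setT F.
  have -> : F = fun y => \sum_(i <- index_iota 1 l.+1) g i y.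
    apply/funext => y; rewrite /F big_seq [RHS]big_seq; apply: eq_bigr => i.
    by rewrite mem_index_iota ltnS /g => ->.
  apply: measurable_sum => i; rewrite /g; case: (boolP (1 <= i <= l)%N) => hi;
    last exact: measurable_cst.
  by apply: measurable_funM; [exact: measurable_cst|exact: f_meas].
have := measurableT_comp (@normr_measurable R setT) mF measurableT
  (measurable_itv `]t, +oo[).
by rewrite setTI preimage_itvoy.
Qed.

Lemma block_sub_level_set t m j : 0 < t -> (1 <= m <= k)%N -> (1 <= j <= l)%N ->
  j%:R < (c m / t) `^ p -> sigma m j `\` N `<=` [set y | t < `|F y|].
Proof.
move=> t0 hm hj jct y [s Ny] /=; rewrite (F_on_block hm hj Ny s) normrM.
rewrite ger0_norm ?powR_ge0 //.
apply: lt_le_trans (ler_wpM2l (powR_ge0 _ _) (c_le_norm_f hm hj Ny s)).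
by apply: lt_powRN_mul; rewrite ?c_gt0 ?ltr0n //; case/andP: hj.
Qed.

Lemma trivIset_blocks (s : seq (nat * nat)) :
  (forall mj, mj \in s -> (1 <= mj.1 <= k)%N && (1 <= mj.2 <= l)%N) ->
  trivIset [set` s] (fun mj => sigma mj.1 mj.2 `\` N).
Proof.
move=> hs [m j] [m' j'] /hs/andP[hm hj] /hs/andP[hm' hj'] /= [y [[s1 Ny] [s2 _]]].
case: (eqVneq j j') s2 => [<-|jj'] s2.
  have [<-//|/eqP mm'] := eqVneq m m'.
  by move: (sigma_disj hj hm hm' mm') => /seteqP[/(_ y (conj s1 s2))].
have := c_le_norm_f hm' hj' Ny s2.
by rewrite (f_eq0_off_block hm hj' hj _ Ny s1) 1?eq_sym // normr0 leNgt c_gt0.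
Qed.

Lemma measure_block m j : (1 <= m <= k)%N -> (1 <= j <= l)%N ->
  mu (sigma m j `\` N) = mu (sigma m j).
Proof.
move=> hm hj; have sm := sigma_meas hj hm.
rewrite [RHS](measureDI mu sm N_meas).
by rewrite (@subset_measure0 _ _ _ mu (sigma m j `&` N) N) ?adde0 //; exact: measurableI.
Qed.

Lemma row_measure_ge t m n : 0 < t -> (1 <= m <= k)%N -> (n <= l)%N ->
  (c m / t) `^ p / 2 <= n%:R ->
  (((delta / t) `^ p / 2)%:E <= \sum_(1 <= j < n.+1) mu (sigma m j `\` N))%E.
Proof.
move=> t0 hm nl xn; have c0 := c_gt0 hm.
have dtc : (delta / t) `^ p = (c m / t) `^ p * (delta / c m) `^ p.
  rewrite -powRM ?divr_ge0 ?(ltW c0) ?(ltW t0) ?(ltW delta_gt0) //.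
  by congr (_ `^ _); field; rewrite !gt_eqF.
apply: (@le_trans _ _ (\sum_(1 <= j < n.+1) ((delta / c m) `^ p)%:E)%E).
  rewrite sumEFin sumr_const_nat subn1 /= lee_fin -[leRHS]mulr_natl dtc mulrAC.
  by rewrite ler_wpM2r ?powR_ge0.
rewrite big_seq [leRHS]big_seq; apply: lee_sum => j.
rewrite mem_index_iota ltnS => /andP[j1 jn]; have hj : (1 <= j <= l)%N.
  by rewrite j1 (leq_trans jn nl).
by rewrite measure_block //; exact/ltW/sigma_large.
Qed.

Lemma level_set_measure_ge t : 0 < t ->
  (forall m, (1 <= m <= k)%N -> 2 <= (c m / t) `^ p <= 2 * l%:R) ->
  ((k%:R / 2 * (delta / t) `^ p)%:E <= mu [set y | (t < `|F y|)%R])%E.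
Proof.
move=> t0 ct.
pose n m := `|Num.ceil ((c m / t) `^ p / 2)|%N.
pose s := [seq (m, j) | m <- index_iota 1 k.+1, j <- index_iota 1 (n m).+1].
have s_range mj : mj \in s ->
    [/\ (1 <= mj.1 <= k)%N, (1 <= mj.2 <= l)%N & mj.2%:R < (c mj.1 / t) `^ p].
  case/allpairsPdep => m [j [+ + ->]]; rewrite !mem_index_iota !ltnS /=.
  move=> hm /andP[j1 jn]; have [nl _ nlt] := ceil_half_bounds (ct m hm).
  by split; rewrite ?hm ?j1 ?(leq_trans jn nl) // (le_lt_trans _ nlt) ?ler_nat.
have us : uniq s.
  apply: allpairs_uniq_dep => [|m _|[? ?] [? ?] _ _ /= [-> ->]] //;
  exact: iota_uniq.
pose B mj := sigma mj.1 mj.2 `\` N.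
apply: le_trans (le_measure_sum_trivIset mu (F := B) us (measurable_level_set t) _ _ _);
  last 3 first.
- by move=> [m j] /s_range[hm hj _]; apply: measurableD => //; exact: sigma_meas.
- by apply: trivIset_blocks => mj /s_range[-> ->].
- by move=> [m j] /s_range[hm hj]; exact: block_sub_level_set.
rewrite big_allpairs_dep /=.
rewrite (_ : k%:R / 2 * _ = \sum_(1 <= m < k.+1) ((delta / t) `^ p / 2)); last first.
  by rewrite sumr_const_nat subn1 -mulr_natl; ring.
rewrite -sumEFin big_seq [leRHS]big_seq; apply: lee_sum => m.
rewrite mem_index_iota ltnS => hm; have [nl nge _] := ceil_half_bounds (ct m hm).
exact: row_measure_ge.
Qed.

End disjoint_blocks.

Theorem lemma9 (R : realType) (p : R) (k l : nat) (delta : R) (c : nat -> R)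
  (d : measure_display) (T : measurableType d) (mu : {measure set T -> \bar R})
  (f : nat -> T -> R) (sigma : nat -> nat -> set T) :
  1 < p -> (0 < k)%N -> 0 < delta ->
  (forall m, (1 <= m <= k)%N -> 0 < c m) ->
  1 <= l%:R * ((\big[Num.min/c 1%N]_(1 <= m < k.+1) c m)
                / (\big[Num.max/c 1%N]_(1 <= m < k.+1) c m)) `^ p ->
  (forall j, (1 <= j <= l)%N -> in_weakLp mu p (f j)) ->
  (forall i j, (1 <= i <= l)%N -> (1 <= j <= l)%N -> i <> j ->
     disjoint_fun mu (f i) (f j)) ->
  (forall j m, (1 <= j <= l)%N -> (1 <= m <= k)%N -> measurable (sigma m j)) ->
  (forall j m m', (1 <= j <= l)%N -> (1 <= m <= k)%N -> (1 <= m' <= k)%N ->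
     m <> m' -> sigma m j `&` sigma m' j = set0) ->
  (forall j m, (1 <= j <= l)%N -> (1 <= m <= k)%N ->
     ((delta / c m) `^ p)%:E < mu (sigma m j))%E ->
  (forall j, (1 <= j <= l)%N ->
     {ae mu, forall x, \sum_(1 <= m < k.+1) c m * \1_(sigma m j) x <= `|f j x|}) ->
  (((k%:R / 2) `^ p^-1 * delta)%:E
     <= weak_norm mu p (fun x => (\sum_(1 <= j < l.+1) j%:R `^ (- p^-1) * f j x)%R))%E.
Proof.
move=> p1 k0 d0 c_gt0 hl f_in f_disj sm sdisj smu f_ge.
have p0 : 0 < p by apply: lt_trans p1.
have [t t_gt0 ct] := exists_level_ratio_bounds p0 k0 c_gt0 hl.
have [N [N_meas N0 hN]] := ae_null_set (@filterS2 _ _ _ _ _ _ (fun _ h1 h2 => conj h1 h2)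
  (ae_forall_in f_ge) (ae_forall_in (fun i hi =>
    ae_forall_in (fun j hj => ae_impl (f_disj i j hi hj))))).
have level := level_set_measure_ge p0 d0 c_gt0 (fun j hj => (f_in j hj).1)
  sm sdisj smu N_meas N0 (fun j y hj Ny => (hN y Ny).1 j hj)
  (fun i j y hi hj ij Ny => (hN y Ny).2 i hi j hj ij) t_gt0 ct.
apply: le_trans (weak_norm_ge_level p0 t_gt0 _ level); last first.
  by rewrite mulr_ge0 ?divr_ge0 ?powR_ge0 ?ler0n.
have dt_ge0 : 0 <= delta / t by rewrite divr_ge0 ?(ltW d0) ?(ltW t_gt0).
rewrite lee_fin (@powRM _ (k%:R / 2)) ?divr_ge0 ?powR_ge0 ?ler0n // powRK //.
by rewrite mulrCA [t * _]mulrC divfK ?gt_eqF.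
Qed.
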